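(* Let $G$ be a locally compact group and $\mathcal K$ a class of finite algebras. Then $G$ is approximable by systems of $\mathcal K$ in the group sense (Definition B below) if and only if it is approximable by systems of $\mathcal K$ in the general sense (Definition A below).
   Context: An algebra is a set with one binary operation; $(H,\odot)$ denotes a finite algebra. Definition A (general): for a compact $C\subseteq G$ and a finite cover $\mathcal U$ of $C$ by open sets, $j:H\to G$ gives a $(C,\mathcal U)$-approximation if every $U\in\mathcal U$ with $U\cap C\neq\emptyset$ contains a point of $j(H)$, and for all $x,y\in H$ with $j(x),j(y),j(x)j(y)\in C$ there is $U\in\mathcal U$ with $j(x\odot y)\in U$ and $j(x)j(y)\in U$; $G$ is approximable by $\mathcal K$ if for all such $C,\mathcal U$ there is a $(C,\mathcal U)$-approximation $(H,j)$ with $H\in\mathcal K$ and $j$ injective. Definition B (group): for a compact $C\subseteq G$ and a neighborhood $U$ of the unit, $j:H\to G$ gives a $(C,U)$-approximation if $C\subseteq j(H)U$ and for all $x,y\in H$ with $j(x),j(y),j(x)j(y)\in C$ one has $j(x\odot y)\in j(x)j(y)U$; $G$ is approximable by $\mathcal K$ if for all compact $C$ and all neighborhoods $U$ of the unit there is a $(C,U)$-approximation $(H,j)$ with $H\in\mathcal K$ and $j$ injective. *)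

From HB Require Import structures.
From mathcomp Require Import all_boot all_order all_algebra.
From mathcomp Require Import all_classical all_reals all_analysis.
Set Implicit Arguments. Unset Strict Implicit. Unset Printing Implicit Defensive.
Local Open Scope classical_set_scope.

Record topological_group (G : topologicalType)
    (mul : G -> G -> G) (inv : G -> G) (one : G) : Prop := {
  tg_mulA : forall x y z, mul x (mul y z) = mul (mul x y) z;
  tg_mul1g : forall x, mul one x = x;
  tg_mulg1 : forall x, mul x one = x;
  tg_mulVg : forall x, mul (inv x) x = one;
  tg_mulgV : forall x, mul x (inv x) = one;
  tg_mul_cont : continuous (fun p : G * G => mul p.1 p.2);
  tg_inv_cont : continuous inv }.

Definition locally_compact_space (G : topologicalType) : Prop :=
  hausdorff_space G /\ forall x : G, exists K : set G, compact K /\ nbhs x K.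

Definition algebra_class := forall H : finType, (H -> H -> H) -> Prop.

Definition general_approx (G : topologicalType) (mul : G -> G -> G)
    (C : set G) (Us : seq (set G)) (H : finType) (op : H -> H -> H)
    (j : H -> G) : Prop :=
  (forall U, U \in Us -> U `&` C !=set0 -> exists h : H, U (j h)) /\
  (forall x y : H, C (j x) -> C (j y) -> C (mul (j x) (j y)) ->
     exists2 U, U \in Us & U (j (op x y)) /\ U (mul (j x) (j y))).

Definition approximable_general (G : topologicalType) (mul : G -> G -> G)
    (K : algebra_class) : Prop :=
  forall (C : set G) (Us : seq (set G)),
    compact C -> (forall U, U \in Us -> open U) ->
    C `<=` (fun g => exists2 U, U \in Us & U g) ->
    exists (H : finType) (op : H -> H -> H) (j : H -> G),
      K H op /\ injective j /\ general_approx mul C Us op j.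

Definition group_approx (G : topologicalType) (mul : G -> G -> G)
    (C U : set G) (H : finType) (op : H -> H -> H) (j : H -> G) : Prop :=
  (forall c, C c -> exists h u, U u /\ c = mul (j h) u) /\
  (forall x y : H, C (j x) -> C (j y) -> C (mul (j x) (j y)) ->
     exists u, U u /\ j (op x y) = mul (mul (j x) (j y)) u).

Definition approximable_group (G : topologicalType) (mul : G -> G -> G)
    (one : G) (K : algebra_class) : Prop :=
  forall (C U : set G), compact C -> nbhs one U ->
    exists (H : finType) (op : H -> H -> H) (j : H -> G),
      K H op /\ injective j /\ group_approx mul C U op j.

From HB Require Import structures.
From mathcomp Require Import all_boot all_order all_algebra.
From mathcomp Require Import all_classical all_reals all_analysis.
Set Implicit Arguments. Unset Strict Implicit. Unset Printing Implicit Defensive.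
Local Open Scope classical_set_scope.

(* (B => A): given a finite open cover Us of C, take a unit neighbourhood V so
   small that every c in C and every c v (v in V) lie in a common member of Us
   (a Lebesgue-number argument on the compact C), and that c_U v^-1 stays in U
   for a fixed point c_U of each U meeting C.  A (C, V)-approximation writes
   c_U = j(h) v, so j(h) = c_U v^-1 lies in U; and j(x.y) = j(x) j(y) v lies
   with j(x) j(y) in one member of Us.
   (A => B): given a unit neighbourhood U, cover C by finitely many open W
   with W^-1 W inside U.  A (C, Ws)-approximation puts some j(h) in the W
   containing c, so c = j(h) (j(h)^-1 c) with j(h)^-1 c in U, and puts j(x.y)
   and j(x) j(y) in a common W. *)

Lemma compact_seq_cover (T : topologicalType) (C : set T) (f : T -> set T) :
  compact C -> (forall c, open (f c)) -> (forall c, C c -> f c c) ->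
  exists s : seq T, C `<=` \bigcup_(c in [set` s]) f c.
Proof.
move=> cC fo Cf; have [->|/set0P[c0 _]] := eqVneq C set0; first by exists [::].
(* [compact_cover] is stated for pointed spaces. *)
pose pT := HB.pack_for ptopologicalType T (isPointed.Build T c0).
have : @cover_compact pT C by rewrite -compact_cover.
case/(_ T C f (fun c _ => fo c)) => [c Cc|D _ sub].
  by exists c => //; exact: Cf.
by exists (finmap.enum_fset D) => c /sub[d Dd fdc]; exists d.
Qed.

Section TopologicalGroup.
Variables (G : topologicalType) (mul : G -> G -> G) (inv : G -> G) (one : G).
Hypothesis tg : topological_group mul inv one.

Lemma mulKVg x y : mul x (mul (inv x) y) = y.
Proof. by rewrite (tg_mulA tg) (tg_mulgV tg) (tg_mul1g tg). Qed.

Lemma mulgVK x y : mul (mul x y) (inv y) = x.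
Proof. by rewrite -(tg_mulA tg) (tg_mulgV tg) (tg_mulg1 tg). Qed.

Lemma invg1 : inv one = one.
Proof. by rewrite -{2}(tg_mulVg tg one) (tg_mulg1 tg). Qed.

Lemma continuous_mull c : continuous (mul c).
Proof.
move=> x; apply: (@continuous_comp _ _ _ (fun y => (c, y))
  (fun p => mul p.1 p.2)).
  apply: cvg_pair; [exact: cvg_cst | exact: cvg_id].
exact: (@tg_mul_cont _ _ _ _ tg (c, x)).
Qed.

Lemma continuous_ldiv : continuous (fun p : G * G => mul (inv p.1) p.2).
Proof.
move=> p; apply: (@continuous_comp _ _ _ (fun q : G * G => (inv q.1, q.2))
  (fun q => mul q.1 q.2)).
  apply: cvg_pair; last exact: cvg_snd.
  exact: (cvg_comp _ _ (@cvg_fst _ _ (nbhs p.1) (nbhs p.2) _)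
                    (@tg_inv_cont _ _ _ _ tg p.1)).
exact: (@tg_mul_cont _ _ _ _ tg (inv p.1, p.2)).
Qed.

Lemma near_one_mulV c (U : set G) : open U -> U c ->
  \forall v \near one, U (mul c (inv v)).
Proof.
move=> oU Uc.
have := continuous_comp (@tg_inv_cont _ _ _ _ tg one)
  (@continuous_mull c (inv one)).
by apply; rewrite /= invg1 (tg_mulg1 tg); exact: open_nbhs_nbhs.
Qed.

Lemma near_one_mul_cover (C : set G) (Us : seq (set G)) :
  compact C -> (forall U, U \in Us -> open U) ->
  C `<=` (fun g => exists2 U, U \in Us & U g) ->
  \forall i \near one,
    forall c, C c -> exists2 U, U \in Us & U c /\ U (mul c i).
Proof.
move=> cC oUs cov.
apply: ((compact_near_coveringP C).1 cC G (nbhs one)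
  (fun i c => exists2 U, U \in Us & U c /\ U (mul c i)) _) => c Cc.
have [U UUs Uc] := cov c Cc.
have nU : nbhs c U by apply: open_nbhs_nbhs; split => //; exact: oUs.
have nU1 : nbhs (mul c one) U by rewrite (tg_mulg1 tg).
have near_mul : \forall p \near (c, one), U (mul p.1 p.2) :=
  @tg_mul_cont _ _ _ _ tg (c, one) _ nU1.
have near_fst : \forall p \near (c, one), U p.1 :=
  @cvg_fst _ _ _ _ (nbhs_filter one) _ nU.
apply: (@filterS _ _ _ (fun p => U (mul p.1 p.2) /\ U p.1)).
  by move=> -[x i] /= [Uxi Ux]; exists U.
exact: filterI near_mul near_fst.
Qed.

Lemma near_one_mulV_reps (C : set G) (Us : seq (set G)) :
  (forall U, U \in Us -> open U) ->
  exists r : set G -> G, (forall U, U `&` C !=set0 -> (U `&` C) (r U)) /\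
    \forall v \near one,
      forall U, U \in Us -> U `&` C !=set0 -> U (mul (r U) (inv v)).
Proof.
move=> oUs.
have /choice[r rUC] : forall U : set G, exists c, U `&` C !=set0 -> (U `&` C) c.
  move=> U; have [[c UCc]|nUC] := pselect (U `&` C !=set0); first by exists c.
  by exists one.
exists r; split => //.
have near_r (U : seq_sub Us) :
    \forall v \near one, val U `&` C !=set0 -> val U (mul (r (val U)) (inv v)).
  have [UC|nUC] := pselect (val U `&` C !=set0).
    have [Ur _] := rUC _ UC.
    by apply: filterS (near_one_mulV (oUs _ (valP U)) Ur) => v.
  by apply: filterS filterT => v _ /nUC.
apply: filterS (filter_forall _ near_r) => v rV U UUs.
exact: (rV (SeqSub UUs)).
Qed.

Lemma ldiv_open_nbhs (U : set G) c : nbhs one U ->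
  exists W, [/\ open W, W c & forall a b, W a -> W b -> U (mul (inv a) b)].
Proof.
move=> nU; have : nbhs (mul (inv c) c) U by rewrite (tg_mulVg tg).
move=> /(@continuous_ldiv (c, c)) [[A B] /= [nA nB] AB].
exists (interior (A `&` B)); split; first exact: open_interior.
  exact: filterI nA nB.
by move=> a b /interior_subset[Aa _] /interior_subset[_ Bb]; exact: (AB (a, b)).
Qed.

Lemma group_approx_general (C : set G) (Us : seq (set G)) :
  compact C -> (forall U, U \in Us -> open U) ->
  C `<=` (fun g => exists2 U, U \in Us & U g) ->
  exists2 V, nbhs one V & forall (H : finType) (op : H -> H -> H) (j : H -> G),
    group_approx mul C V op j -> general_approx mul C Us op j.
Proof.
move=> cC oUs cov; have [r [rUC near_r]] := near_one_mulV_reps C oUs.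
apply: ex_intro2 (filterI (near_one_mul_cover cC oUs cov) near_r) _.
move=> H op j [jC jmul]; split.
  move=> U UUs UC; have [_ Cr] := rUC U UC.
  have [h [v [[_ Vv] rE]]] := jC _ Cr.
  by exists h; have := Vv U UUs UC; rewrite rE mulgVK.
move=> x y Cx Cy Cxy; have [u [[Vu _] ->]] := jmul x y Cx Cy Cxy.
by have [U UUs [U1 U2]] := Vu _ Cxy; exists U.
Qed.

Lemma general_approx_group (C U : set G) : compact C -> nbhs one U ->
  exists Us : seq (set G), [/\ forall W, W \in Us -> open W,
    C `<=` (fun g => exists2 W, W \in Us & W g) &
    forall (H : finType) (op : H -> H -> H) (j : H -> G),
      general_approx mul C Us op j -> group_approx mul C U op j].
Proof.
move=> cC nU; have [W Wc] := choice (fun c => ldiv_open_nbhs c nU).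
have Wo c : open (W c) by case: (Wc c).
have Wcc c : W c c by case: (Wc c).
have Wdiv c a b : W c a -> W c b -> U (mul (inv a) b).
  by case: (Wc c) => _ _; apply.
have [s sC] := compact_seq_cover cC Wo (fun c _ => Wcc c).
exists (map W s); split.
- by move=> _ /mapP[c _ ->]; exact: Wo.
- by move=> g /sC[c cs Wcg]; exists (W c) => //; exact: map_f.
move=> H op j [jO jmul]; split.
  move=> g Cg; have [c cs Wcg] := sC g Cg.
  have [h Wjh] := jO (W c) (map_f W cs) (ex_intro _ g (conj Wcg Cg)).
  exists h, (mul (inv (j h)) g).
  by split; [exact: Wdiv Wjh Wcg | rewrite mulKVg].
move=> x y Cx Cy Cxy.
have [_ /mapP[c _ ->] [Wjxy Wxy]] := jmul x y Cx Cy Cxy.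
exists (mul (inv (mul (j x) (j y))) (j (op x y))).
by split; [exact: Wdiv Wxy Wjxy | rewrite mulKVg].
Qed.

End TopologicalGroup.

Theorem proposition3 (G : topologicalType) (mul : G -> G -> G) (inv : G -> G)
    (one : G) (K : algebra_class) :
  topological_group mul inv one -> locally_compact_space G ->
  (approximable_group mul one K <-> approximable_general mul K).
Proof.
move=> tg _; split.
- move=> approxB C Us cC oUs cov.
  have [V nV VUs] := group_approx_general tg cC oUs cov.
  have [H [op [j [KH [jinj jV]]]]] := approxB C V cC nV.
  by exists H, op, j; split; [|split; [|exact: VUs]].
- move=> approxA C U cC nU.
  have [Us [oUs cov UsU]] := general_approx_group tg cC nU.
  have [H [op [j [KH [jinj jUs]]]]] := approxA C Us cC oUs cov.
  by exists H, op, j; split; [|split; [|exact: UsU]].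
Qed.
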